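(* Let $\alpha\in\mathcal{P}(n)$ with $\delta(\alpha)=(d_k)_{k\ge1}$. Then for every $k\ge1$: (1) $d_{k+1}-d_k\le1$, with equality if and only if $d_j=j$ for all $1\le j\le k+1$; (2) if $d_k\ge d_{k+1}$, then $d_{k+1}\ge d_{k+2}$.
   Context: A partition of a positive integer $n$ is a finite non-increasing sequence $\alpha=(\alpha_1,\dots,\alpha_l)$ of positive integers with sum $n$; $\mathcal{P}(n)$ is the set of partitions of $n$, and $\alpha_i=0$ for $i>l$. The diagonal sequence of $\alpha$ is $\delta(\alpha)=(d_k)_{k\ge1}$ with $d_k=|\{i:1\le i\le k,\ \alpha_i+i-1\ge k\}|$. *)

From mathcomp Require Import all_boot.
Set Implicit Arguments. Unset Strict Implicit. Unset Printing Implicit Defensive.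

Definition is_partition (n : nat) (a : seq nat) : Prop :=
  [/\ sorted geq a, all (fun x => 0 < x) a & sumn a = n].

(* alpha_i with 1-based indexing; alpha_i = 0 for i > length. *)
Definition part (a : seq nat) (i : nat) : nat := nth 0 a i.-1.

Definition diag (a : seq nat) (k : nat) : nat :=
  count (fun i => k <= part a i + i - 1) (iota 1 k).

From mathcomp Require Import all_boot.
From mathcomp Require Import zify.

(* Put g(i) = alpha_i + i - 1, the last antidiagonal met by row i of the
   diagram, so that d_k = #{i <= k : g(i) >= k}.  As alpha is non-increasing,
   g grows by at most one per step, and splitting the count at level k gives
     d_(k+1) + #{i <= k : g(i) = k} = d_k + [g(k+1) >= k+1].
   Both claims then follow from a discrete intermediate value argument:
   if g(i) <= m < g(j) with i <= j, then g takes the value m on [i, j). *)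

Definition diag_of (g : nat -> nat) (k : nat) : nat :=
  count (fun i => k <= g i) (iota 1 k).

Definition last_antidiag (a : seq nat) (i : nat) : nat := part a i + i - 1.

Lemma partS_le (a : seq nat) i : sorted geq a -> part a i.+1 <= part a i.
Proof.
(* [part a 0] is [part a 1], since [0.-1 = 0]. *)
move=> /sortedP sorted_a; case: i => [|i] //; rewrite /part /=.
case: (ltnP i.+1 (size a)) => [/(sorted_a 0)//|a_le].
by rewrite nth_default.
Qed.

Lemma last_antidiagS_le (a : seq nat) :
  sorted geq a -> forall i, last_antidiag a i.+1 <= (last_antidiag a i).+1.
Proof.
by move=> sorted_a i; have := partS_le a i sorted_a; rewrite /last_antidiag; lia.
Qed.

Lemma count_leq_split (g : nat -> nat) k (s : seq nat) :
  count (fun i => k <= g i) s =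
  count (fun i => k < g i) s + count (fun i => g i == k) s.
Proof. by elim: s => //= x s ->; case: ltngtP => /=; lia. Qed.

Section UnitStepCounting.

Variable g : nat -> nat.
Hypothesis g_step : forall t, g t.+1 <= (g t).+1.

Lemma exists_level_before {i j m} :
  i <= j -> g i <= m < g j -> exists2 t, i <= t < j & g t = m.
Proof.
elim: j => [|j IHj] le_ij /andP[gi_m m_gj].
  by move: le_ij gi_m; rewrite leqn0 => /eqP->; rewrite leqNgt m_gj.
have {}le_ij : i <= j.
  by case: ltngtP le_ij gi_m => // -> _; rewrite leqNgt m_gj.
case: (leqP (g j) m) => [gj_m | m_gj'].
  exists j; first by rewrite le_ij ltnSn.
  by apply/eqP; rewrite eqn_leq gj_m -ltnS (leq_trans m_gj).
have [|t /andP[it tj] gt] := IHj le_ij; first by rewrite gi_m m_gj'.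
by exists t; rewrite // it ltnW.
Qed.

Lemma diag_ofS_add k :
  diag_of g k.+1 + count (fun i => g i == k) (iota 1 k) =
  diag_of g k + (k.+1 <= g k.+1).
Proof.
rewrite /diag_of -addn1 iotaD count_cat /= add1n addn0 (count_leq_split g k) addn1.
lia.
Qed.

Lemma diag_ofS_le k : diag_of g k.+1 <= (diag_of g k).+1.
Proof. by have := diag_ofS_add k; case: (_ <= _); lia. Qed.

Lemma diag_of_id j : (forall i, 1 <= i <= j -> j <= g i) -> diag_of g j = j.
Proof.
move=> ge_j; apply/eqP; rewrite -[X in _ == X](size_iota 1 j) -all_count.
by apply/allP => i; rewrite mem_iota add1n ltnS; apply: ge_j.
Qed.

Lemma diag_ofS_eq_succ_ge k :
  diag_of g k.+1 = (diag_of g k).+1 -> forall i, 1 <= i <= k.+1 -> k.+1 <= g i.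
Proof.
move=> eq_succ.
have [reach_k no_level] :
    k.+1 <= g k.+1 /\ ~~ has (fun i => g i == k) (iota 1 k).
  by move: (diag_ofS_add k); rewrite has_count eq_succ; case: (_ <= _); lia.
move=> i /andP[i_ge1 i_le]; rewrite ltnNge; apply/negP => gi_k.
have gi_lt : g i <= k < g k.+1 by rewrite gi_k reach_k.
have [t /andP[it tk] gt] := exists_level_before i_le gi_lt.
case/hasP: no_level; exists t; last exact/eqP.
by rewrite mem_iota add1n (leq_trans i_ge1 it).
Qed.

Lemma diag_ofS_eq_succ k :
  diag_of g k.+1 = (diag_of g k).+1 <-> (forall j, 1 <= j <= k.+1 -> diag_of g j = j).
Proof.
split=> [/diag_ofS_eq_succ_ge ge_k j /andP[j_ge1 j_le] | diag_id].
  apply: diag_of_id => i /andP[i_ge1 i_le].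
  by rewrite (leq_trans j_le) // ge_k // i_ge1 (leq_trans i_le j_le).
rewrite diag_id ?leqnn //; case: k diag_id => [|k] diag_id; first by [].
by rewrite diag_id ?leqnSn.
Qed.

Lemma diag_of_stable k :
  diag_of g k.+1 <= diag_of g k -> diag_of g k.+2 <= diag_of g k.+1.
Proof.
move=> non_incr.
suff: k.+2 <= g k.+2 -> has (fun i => g i == k.+1) (iota 1 k.+1).
  by have := diag_ofS_add k.+1; rewrite has_count; case: (_ <= _); lia.
move=> reach_k2.
have reach_k1 : k.+1 <= g k.+1 by have := g_step k.+1; lia.
have : has (fun i => g i == k) (iota 1 k).
  by have := diag_ofS_add k; rewrite has_count reach_k1; lia.
case/hasP=> i; rewrite mem_iota add1n => /andP[i_ge1 i_le] /eqP gi.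
have i_le2 : i <= k.+2 by lia.
have gi_lt : g i <= k.+1 < g k.+2 by rewrite gi leqnSn.
have [t /andP[it tk] gt] := exists_level_before i_le2 gi_lt.
apply/hasP; exists t; last exact/eqP.
by rewrite mem_iota add1n (leq_trans i_ge1 it) /=; lia.
Qed.

End UnitStepCounting.

Theorem lemma2p1 (n : nat) (a : seq nat) :
  is_partition n a ->
  forall k : nat, 1 <= k ->
    [/\ diag a k.+1 <= (diag a k).+1,
        diag a k.+1 = (diag a k).+1 <-> (forall j, 1 <= j <= k.+1 -> diag a j = j)
      & diag a k.+1 <= diag a k -> diag a k.+2 <= diag a k.+1].
Proof.
case=> /last_antidiagS_le step _ _ k _; split.
- exact: diag_ofS_le.
- exact: (diag_ofS_eq_succ _ step).
- exact: (diag_of_stable _ step).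
Qed.
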